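(* Let $K\subset\mathbb R^2$ be a compact connected set with $\mathcal H^1(K)<+\infty$. Assume that for some $x\in K$ and $r\in(0,\mathrm{diam}(K))$ we have $\beta_K(x,r)\leq1/2$. Then $$\mathcal H^1(K\cap B(x,r))\geq 2r-3r\beta_K(x,r).$$
   Context: $\beta_K(x,r)=\frac1r\inf_L\max\{\sup_{y\in K\cap\overline B(x,r)}\mathrm{dist}(y,L),\sup_{y\in L\cap\overline B(x,r)}\mathrm{dist}(y,K)\}$, the infimum being over lines $L$ passing through $x$. *)

(* The plane R^2 is modelled as R * R (product
   topology = Euclidean topology), with the Euclidean distance given below. *)
From HB Require Import structures.
From mathcomp Require Import all_boot all_order all_algebra.
From mathcomp Require Import all_classical all_reals all_analysis.
Set Implicit Arguments. Unset Strict Implicit. Unset Printing Implicit Defensive.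
Import Order.TTheory GRing.Theory Num.Theory.
Import numFieldNormedType.Exports.
Local Open Scope classical_set_scope.
Local Open Scope ring_scope.

Section Plane.
Variable R : realType.
Definition pt := (R * R)%type.

Definition edist (p q : pt) : R :=
  Num.sqrt ((p.1 - q.1) ^+ 2 + (p.2 - q.2) ^+ 2).

Definition eball (x : pt) (r : R) : set pt := [set y | edist x y < r].
Definition ecball (x : pt) (r : R) : set pt := [set y | edist x y <= r].

(* diameter (in \bar R; the diameter of the empty set is 0) *)
Definition ediam (A : set pt) : \bar R :=
  ereal_sup ([set (edist p q)%:E | p in A & q in A] `|` [set 0%E]).

Definition edist_set (y : pt) (S : set pt) : \bar R :=
  ereal_inf [set (edist y z)%:E | z in S].

Definition H1_delta (delta : R) (A : set pt) : \bar R :=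
  ereal_inf [set (\sum_(i <oo) ediam (E i))%E | E in
    [set E : nat -> set pt | A `<=` \bigcup_i E i /\
                             forall i, (ediam (E i) <= delta%:E)%E]].

(* 1-dimensional Hausdorff measure H^1 (normalized so that H^1 = length) *)
Definition H1 (A : set pt) : \bar R :=
  ereal_sup [set H1_delta delta A | delta in [set d : R | 0 < d]].

Definition line_through (x v : pt) : set pt :=
  [set y | exists t : R, y = (x.1 + t * v.1, x.2 + t * v.2)].

Definition lines_through (x : pt) : set (set pt) :=
  [set line_through x v | v in [set v : pt | v != (0, 0)]].

Definition beta (K : set pt) (x : pt) (r : R) : \bar R :=
  ((r^-1)%:E * ereal_inf [set
     maxe (ereal_sup [set edist_set y L | y in K `&` ecball x r])
          (ereal_sup [set edist_set y K | y in L `&` ecball x r])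
   | L in lines_through x])%E.
End Plane.

From Pilot Require Import Defs.
From HB Require Import structures.
From mathcomp Require Import all_boot all_order all_algebra.
From mathcomp Require Import all_classical all_reals all_analysis.
From mathcomp Require Import ring lra.
Set Implicit Arguments.
Unset Strict Implicit.
Unset Printing Implicit Defensive.
Import Order.TTheory GRing.Theory Num.Theory.
Import numFieldNormedType.Exports.
Local Open Scope classical_set_scope.
Local Open Scope ring_scope.

(* A line through x realising beta_K(x,r) up to epsilon has a unit direction u,
   and with b slightly above r beta_K(x,r) the set K inside the closed ball lies
   within b of the line, while every point of the diameter x + [-r, r] u lies
   within b of K. The coordinate along u is 1-Lipschitz, so H^1(K ∩ B(x,r)) is at
   least the Lebesgue measure of the projection P of K ∩ B(x,r). Call t a gap if
   |t| <= r - b/2 and t is not in P. Near the boundary of the slab between two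
   gaps K stays inside B(x,r), so by connectedness K lies strictly between them;
   as K contains x and comes within b of both ends of the diameter, two gaps more
   than 2b apart lie on opposite sides of 0 and then beyond -(r - b) and r - b.
   Hence either all gaps fit in one interval of length 2b, or P contains
   [-(r - b), r - b]; in both cases P has measure at least 2r - 3b. *)

Lemma pairwise_close_sub_itv (R : realType) (G : set R) (d : R) :
  (forall s t, G s -> G t -> t <= s + d) -> exists m, G `<=` `[m, m + d].
Proof.
move=> close; have [[g Gg]|G0] := pselect (G !=set0); last first.
  by exists 0 => t Gt; exfalso; apply: G0; exists t.
exists (inf G) => t Gt; rewrite /= in_itv /=; apply/andP; split.
  by apply: ge_inf => //; exists (g - d) => s Gs; rewrite lerBlDr; exact: close.
by rewrite -lerBlDr; apply: lb_le_inf; [exists g|move=> s Gs; rewrite lerBlDr; exact: close].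
Qed.

Lemma connected_subset_clopen (T : topologicalType) (A U V : set T) :
  connected A -> open U -> closed V -> A `&` U = A `&` V -> A `&` U !=set0 ->
  A `<=` U.
Proof.
move=> cA oU cV UV AU0 y Ay.
have AUA := cA (A `&` U) AU0 (ex_intro2 _ _ U oU erefl) (ex_intro2 _ _ V cV UV).
by have [] : (A `&` U) y by rewrite AUA.
Qed.

Section Plane.
Variable R : realType.
Implicit Types (p q x y z u : pt R) (s t : R) (A E : set (pt R)).
Local Notation edist := (@Defs.edist R).

Definition along x u y : R := (y.1 - x.1) * u.1 + (y.2 - x.2) * u.2.
Definition across x u y : R := (y.2 - x.2) * u.1 - (y.1 - x.1) * u.2.
Definition line_pt x u s : pt R := (x.1 + s * u.1, x.2 + s * u.2).

Lemma edist_ge0 p q : 0 <= edist p q.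
Proof. exact: sqrtr_ge0. Qed.

Lemma edist_sqr p q : edist p q ^+ 2 = (p.1 - q.1) ^+ 2 + (p.2 - q.2) ^+ 2.
Proof. by rewrite sqr_sqrtr // addr_ge0 // sqr_ge0. Qed.

Lemma edist_sym p q : edist p q = edist q p.
Proof. by rewrite /edist -sqrrN opprB -[(p.2 - _) ^+ 2]sqrrN opprB. Qed.

Lemma edist_refl p : edist p p = 0.
Proof. by rewrite /edist !subrr expr0n /= addr0 sqrtr0. Qed.

Lemma edist_continuous x : continuous (edist x).
Proof.
move=> y; apply: continuous_comp; last exact: sqrt_continuous.
apply: continuousD; apply: (continuous_comp _ (@exprn_continuous R 2 _));
  apply: continuousB; [exact: cst_continuous| |exact: cst_continuous|].
- by case: y => ? ?; exact: cvg_fst.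
- by case: y => ? ?; exact: cvg_snd.
Qed.

Lemma along_continuous x u : continuous (along x u).
Proof.
move=> y; apply: (@continuousD _ _ _ (fun y : pt R => (y.1 - x.1) * u.1)
  (fun y => (y.2 - x.2) * u.2)); apply: continuousM; try exact: cst_continuous;
  apply: continuousB; try exact: cst_continuous.
- by case: y => ? ?; exact: cvg_fst.
- by case: y => ? ?; exact: cvg_snd.
Qed.

Lemma along_id x u : along x u x = 0.
Proof. by rewrite /along !subrr !mul0r addr0. Qed.

Lemma alongB x u y y' : along x u y - along x u y' = along y' u y.
Proof. by rewrite /along; ring. Qed.

Lemma along_line_pt x u s y : u.1 ^+ 2 + u.2 ^+ 2 = 1 ->
  along (line_pt x u s) u y = along x u y - s.
Proof. by move=> hu; rewrite /along /= -[s in RHS]mulr1 -hu; ring. Qed.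

Lemma across_line_pt x u s y : across (line_pt x u s) u y = across x u y.
Proof. by rewrite /across /=; ring. Qed.

Lemma edist_sqr_along_across x u y : u.1 ^+ 2 + u.2 ^+ 2 = 1 ->
  edist x y ^+ 2 = along x u y ^+ 2 + across x u y ^+ 2.
Proof. by move=> hu; rewrite edist_sqr -[LHS]mulr1 -hu /along /across; ring. Qed.

Lemma edist_line_pt_sqr x u s y : u.1 ^+ 2 + u.2 ^+ 2 = 1 ->
  edist (line_pt x u s) y ^+ 2 = (along x u y - s) ^+ 2 + across x u y ^+ 2.
Proof.
by move=> hu; rewrite (edist_sqr_along_across _ _ hu) along_line_pt // across_line_pt.
Qed.

Lemma along_lipschitz x u y y' : u.1 ^+ 2 + u.2 ^+ 2 = 1 ->
  along x u y - along x u y' <= edist y y'.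
Proof.
move=> hu; rewrite alongB edist_sym.
have := edist_sqr_along_across y' y hu; have := edist_ge0 y' y.
have := sqr_ge0 (across y' u y); nra.
Qed.

Lemma ediam_ge0 A : (0 <= ediam A)%E.
Proof. by apply: ereal_sup_ubound; right. Qed.

Lemma edist_le_ediam A p q : A p -> A q -> ((edist p q)%:E <= ediam A)%E.
Proof. by move=> Ap Aq; apply: ereal_sup_ubound; left; exists p => //; exists q. Qed.

Lemma lebesgue_measure_itv_cc (a c : R) : a <= c ->
  lebesgue_measure (`[a, c]%classic : set R) = (c - a)%:E.
Proof.
move=> ac; rewrite lebesgue_measure_itv /= lte_fin.
by case: ltgtP ac => // <-; rewrite subrr.
Qed.

Section LipschitzProjection.
Variable f : pt R -> R.
Hypothesis f_lipschitz : forall p q, f p - f q <= edist p q.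

Lemma lipschitz_image_sub_itv E d : ediam E = d%:E ->
  f @` E `<=` `[inf (f @` E), inf (f @` E) + d].
Proof.
move=> dE _ [y Ey <-].
have lb : lbound (f @` E) (f y - d).
  move=> _ [y' Ey' <-]; rewrite lerBlDr -lerBlDl.
  apply: le_trans (f_lipschitz y y') _; rewrite -lee_fin -dE.
  exact: edist_le_ediam.
rewrite /= in_itv /=; apply/andP; split.
  by apply: ge_inf; [exists (f y - d)|exists y].
by rewrite -lerBlDr; apply: lb_le_inf => //; exists (f y), y.
Qed.

Lemma lebesgue_measure_le_H1 A (S : set R) : measurable S -> S `<=` f @` A ->
  (lebesgue_measure S <= H1 A)%E.
Proof.
move=> mS SfA; apply: (@le_trans _ _ (H1_delta 1 A)); last first.
  by apply: ereal_sup_ubound; exists 1 => //=; rewrite ltr01.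
apply: le_ereal_inf_tmp => _ [E [AE _] <-].
have [[k Ek]|Efin] := pselect (exists k, ediam (E k) = +oo%E).
  by rewrite (nneseries_pinfty _ _ Ek) ?leey // => n _; exact: ediam_ge0.
have dE k : ediam (E k) = (fine (ediam (E k)))%:E.
  rewrite fineK // ge0_fin_numE ?ediam_ge0 // ltey; apply/negP => /eqP Ek.
  by apply: Efin; exists k.
pose d k := fine (ediam (E k)).
pose J k : set R := `[inf (f @` E k), inf (f @` E k) + d k]%classic.
have mJ k : measurable (J k) by exact: measurable_itv.
have SJ : S `<=` \bigcup_k J k.
  move=> _ /SfA [y Ay <-]; have [k _ Eky] := AE y Ay.
  by exists k => //; apply: lipschitz_image_sub_itv (dE k) _ _; exists y.
have mU := bigcupT_measurable J mJ.
apply: le_trans (le_measure lebesgue_measure (mem_set mS) (mem_set mU) SJ) _.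
apply: le_trans (measure_sigma_subadditive lebesgue_measure mJ mU (@subset_refl _ _)) _.
apply: lee_nneseries => [k _ _|k _]; first exact: measure_ge0.
have := @lebesgue_measure_itv_cc (inf (f @` E k)) (inf (f @` E k) + d k).
by rewrite lerDl fine_ge0 ?ediam_ge0 // addrAC subrr add0r -dE => /(_ isT) <-.
Qed.

Lemma itv_cover_le_H1 A (a1 a2 j1 j2 : R) : a1 <= a2 -> j1 <= j2 ->
  `[a1, a2] `<=` `[j1, j2] `|` f @` A ->
  (((a2 - a1) - (j2 - j1))%:E <= H1 A)%E.
Proof.
move=> a12 j12 cover.
pose S := `[a1, a2] `\` `[j1, j2] : set R.
have mJ : measurable (`[j1, j2] : set R) by exact: measurable_itv.
have mS : measurable S by apply: measurableD => //; exact: measurable_itv.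
have SfA : S `<=` f @` A by move=> t [/cover [] //].
have cover' : `[a1, a2] `<=` `[j1, j2] `|` S.
  by move=> t a1t; have [Jt|Jt] := pselect (`[j1, j2]%classic t); [left|right].
rewrite EFinB leeBlDl // -(lebesgue_measure_itv_cc a12) -(lebesgue_measure_itv_cc j12).
apply: le_trans (le_measure lebesgue_measure (mem_set (measurable_itv `[a1, a2]))
  (mem_set (measurableU _ _ mJ mS)) cover') _.
apply: le_trans (measureU2 lebesgue_measure mJ mS) _.
by apply: leeD => //; exact: lebesgue_measure_le_H1.
Qed.

End LipschitzProjection.

Record flat_along K x u r b : Prop := FlatAlong {
  flat_unit : u.1 ^+ 2 + u.2 ^+ 2 = 1;
  flat_K_near_line : forall y, K y -> edist x y <= r -> across x u y ^+ 2 < b ^+ 2;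
  flat_line_near_K : forall s, `|s| <= r -> exists2 z, K z & edist (line_pt x u s) z < b }.

Section FlatAlong.
Variables (K : set (pt R)) (x u : pt R) (r b : R).
Hypotheses (Kx : K x) (K_connected : connected K).
Hypotheses (b_gt0 : 0 < b) (b_le_r : 5 * b <= 4 * r).
Hypothesis flatK : flat_along K x u r b.

Let u_unit := flat_unit flatK.

(* lra and nra only read the local context, not the section hypotheses. *)
Local Ltac bounds := have ? := b_gt0; have ? := b_le_r.

Local Notation proj := (along x u @` (K `&` eball x r)).

Lemma proj0 : proj 0.
Proof.
by exists x; last exact: along_id; split => //; rewrite /eball /= edist_refl; bounds; lra.
Qed.

Lemma line_pt_near_K s : `|s| <= r ->
  exists2 z, K z & (along x u z - s) ^+ 2 + across x u z ^+ 2 < b ^+ 2.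
Proof.
move=> /(flat_line_near_K flatK) [z Kz zb]; exists z => //.
rewrite -(edist_line_pt_sqr _ _ _ u_unit).
by have := edist_ge0 (line_pt x u s) z; nra.
Qed.

Lemma K_near_along s : `|s| <= r -> exists2 z, K z & s - b < along x u z < s + b.
Proof.
move=> /line_pt_near_K [z Kz zb]; exists z => //.
by have := sqr_ge0 (across x u z); bounds; move=> ?; apply/andP; split; nra.
Qed.

Lemma proj_near s : `|s| <= r - b -> exists2 t, proj t & s - b < t < s + b.
Proof.
move=> sr; bounds; have [|z Kz zb] := line_pt_near_K (s := s); first lra.
set a := along x u z - s in zb.
have a_lt : -b < a < b by have := sqr_ge0 (across x u z); bounds; move=> ?; apply/andP; split; nra.
exists (along x u z); last by rewrite /a in a_lt; apply/andP; split; lra.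
exists z => //; split => //; rewrite /eball /=.
have s_abs : - `|s| <= s <= `|s| by rewrite -ler_norml.
have sa : s * a <= `|s| * b.
  have : 0 <= (`|s| - s) * (b + a) by apply: mulr_ge0; lra.
  have : 0 <= (`|s| + s) * (b - a) by apply: mulr_ge0; lra.
  nra.
have := edist_sqr_along_across x z u_unit; have := edist_ge0 x z.
rewrite -[along x u z](subrK s) -/a; nra.
Qed.

Lemma K_slab_in_ball y : K y -> edist x y <= r -> `|along x u y| <= r - b / 2 ->
  edist x y < r.
Proof.
move=> Ky yr; rewrite ler_norml => /andP[y1 y2]; bounds.
have := flat_K_near_line flatK Ky yr; have := edist_sqr_along_across x y u_unit.
have := edist_ge0 x y; nra.
Qed.

Lemma K_between_gaps t1 t2 : - (r - b / 2) <= t1 -> t2 <= r - b / 2 ->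
  ~ proj t1 -> ~ proj t2 -> (exists2 t, proj t & t1 < t < t2) ->
  forall y, K y -> t1 < along x u y < t2.
Proof.
move=> t1r t2r gap1 gap2 [_ [z [Kz zr] <-] /andP[zt1 zt2]].
pose U := [set y | t1 < along x u y] `&` [set y | along x u y < t2] `&`
  [set y | edist x y < r].
pose V := [set y | t1 <= along x u y] `&` [set y | along x u y <= t2] `&`
  [set y | edist x y <= r].
have cont_along := @along_continuous x u.
have cont_edist := @edist_continuous x.
have oU : open U.
  apply: openI; first apply: openI.
  - exact: (open_comp (fun y _ => cont_along y) (@open_gt _ t1)).
  - exact: (open_comp (fun y _ => cont_along y) (@open_lt _ t2)).
  - exact: (open_comp (fun y _ => cont_edist y) (@open_lt _ r)).
have cV : closed V.
  apply: closedI; first apply: closedI.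
  - exact: (preimage_closed (fun y _ => cont_along y) (@closed_ge _ t1)).
  - exact: (preimage_closed (fun y _ => cont_along y) (@closed_le _ t2)).
  - exact: (preimage_closed (fun y _ => cont_edist y) (@closed_le _ r)).
have KUV : K `&` U = K `&` V.
  apply/seteqP; split => y [Ky]; first by move=> [[/ltW ? /ltW ?] /ltW ?].
  move=> [[/= y1 y2] yr].
  have yr' : edist x y < r by apply: K_slab_in_ball => //; rewrite ler_norml; lra.
  split => //; split; [split|] => //=; rewrite lt_neqAle ?y1 ?y2 andbT.
    by apply/eqP => t1y; apply: gap1; exists y.
  by apply/eqP => yt2; apply: gap2; exists y.
have KU0 : K `&` U !=set0 by exists z.
move=> y /(connected_subset_clopen K_connected oU cV KUV KU0) [[/= y1 y2] _].
by rewrite y1 y2.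
Qed.

Lemma wide_gaps_straddle t1 t2 : - (r - b / 2) <= t1 -> t2 <= r - b / 2 ->
  ~ proj t1 -> ~ proj t2 -> t1 + 2 * b < t2 -> t1 < 0 < t2.
Proof.
move=> t1r t2r gap1 gap2 wide; bounds.
have [|t pt /andP[t1t tt2]] := proj_near (s := (t1 + t2) / 2).
  by rewrite ler_norml; apply/andP; split; lra.
have := K_between_gaps t1r t2r gap1 gap2 _ Kx; rewrite along_id; apply.
by exists t => //; apply/andP; split; lra.
Qed.

Lemma straddling_gaps_far t1 t2 : - (r - b / 2) <= t1 -> t1 < 0 -> 0 < t2 ->
  t2 <= r - b / 2 -> ~ proj t1 -> ~ proj t2 -> t1 < - (r - b) /\ r - b < t2.
Proof.
move=> t1r t1_lt0 t2_gt0 t2r gap1 gap2; bounds.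
have r_gt0 : 0 < r by lra.
have inK : forall y, K y -> t1 < along x u y < t2.
  by apply: K_between_gaps => //; exists 0; [exact: proj0|apply/andP].
have [|zl Kzl /andP[_ zl_lt]] := K_near_along (s := - r); first by rewrite normrN gtr0_norm.
have [|zr Kzr /andP[zr_gt _]] := K_near_along (s := r); first by rewrite gtr0_norm.
have /andP[zl_gt _] := inK zl Kzl.
have /andP[_ zr_lt] := inK zr Kzr.
by split; lra.
Qed.

Lemma flat_along_H1_ge : ((2 * r - 3 * b)%:E <= H1 (K `&` eball x r))%E.
Proof.
have lip p q := along_lipschitz x p q u_unit; bounds.
set c := r - b / 2.
have [[t1 [t2 [/andP[t1c t1_lt0] /andP[t2_gt0 t2c] gap1 gap2]]]|one_sided] :=
  pselect (exists t1 t2, [/\ - c <= t1 < 0, 0 < t2 <= c, ~ proj t1 & ~ proj t2]).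
  have cover : `[- (r - b), r - b] `<=` `[0, 0] `|` proj.
    move=> t; rewrite /= in_itv /= => /andP[tl tr]; right; apply: contrapT => gap.
    have [tc ct] : - c <= t /\ t <= c by rewrite /c; split; lra.
    have [t_lt0|t_gt0|t0] := ltgtP t 0; last by apply: gap; rewrite t0; exact: proj0.
      by have [] := straddling_gaps_far tc t_lt0 t2_gt0 t2c gap gap2; lra.
    by have [] := straddling_gaps_far t1c t1_lt0 t_gt0 ct gap1 gap; lra.
  apply: le_trans (itv_cover_le_H1 lip _ _ cover); rewrite ?lee_fin; lra.
have close s t : (- c <= s <= c /\ ~ proj s) -> (- c <= t <= c /\ ~ proj t) ->
    t <= s + 2 * b.
  move=> [/andP[sl sr] gaps] [/andP[tl tr] gapt]; rewrite leNgt; apply/negP => wide.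
  have /andP[s_lt0 t_gt0] := wide_gaps_straddle sl tr gaps gapt wide.
  by apply: one_sided; exists s, t; split => //; apply/andP.
have [m gaps_in] := pairwise_close_sub_itv close.
have cover : `[- c, c] `<=` `[m, m + 2 * b] `|` proj.
  move=> t ct; have [pt|gap] := pselect (proj t); [right|left] => //.
  by apply: gaps_in; split => //; move: ct; rewrite /= in_itv.
apply: le_trans (itv_cover_le_H1 lip _ _ cover); rewrite ?lee_fin /c; lra.
Qed.

End FlatAlong.

Lemma edist_line_pt x u s : u.1 ^+ 2 + u.2 ^+ 2 = 1 -> edist x (line_pt x u s) = `|s|.
Proof.
move=> hu; rewrite /edist /line_pt /=.
have -> : (x.1 - (x.1 + s * u.1)) ^+ 2 + (x.2 - (x.2 + s * u.2)) ^+ 2 =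
  s ^+ 2 * (u.1 ^+ 2 + u.2 ^+ 2) by ring.
by rewrite hu mulr1 sqrtr_sqr.
Qed.

Lemma line_through_unit x v : v != (0, 0) ->
  exists2 u, u.1 ^+ 2 + u.2 ^+ 2 = 1 & line_through x v = range (line_pt x u).
Proof.
move=> v0; pose n := Num.sqrt (v.1 ^+ 2 + v.2 ^+ 2).
have n_gt0 : 0 < n.
  rewrite /n sqrtr_gt0 lt_neqAle addr_ge0 ?sqr_ge0 // andbT eq_sym paddr_eq0 ?sqr_ge0 //.
  by rewrite !sqrf_eq0; apply: contra v0 => /andP[/eqP v1 /eqP v2]; rewrite [v]surjective_pairing v1 v2.
have n0 : n != 0 by rewrite gt_eqF.
have n2 : n ^+ 2 = v.1 ^+ 2 + v.2 ^+ 2 by rewrite sqr_sqrtr // addr_ge0 ?sqr_ge0.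
exists (v.1 / n, v.2 / n); first by rewrite /= !expr_div_n -mulrDl -n2 divff // expf_neq0.
apply/seteqP; split => [_ [t ->]|_ [t _ <-]].
  by exists (t * n) => //; rewrite /line_pt /=; congr pair; field.
by exists (t / n); rewrite /line_pt /=; congr pair; field.
Qed.

Lemma beta_ge0 K x (r : R) : K x -> 0 < r -> (0 <= beta K x r)%E.
Proof.
move=> Kx r_gt0; apply: mule_ge0; first by rewrite lee_fin invr_ge0 ltW.
apply: le_ereal_inf_tmp => _ [L _ <-]; rewrite le_max; apply/orP; left.
apply: (@le_trans _ _ (edist_set x L)).
  by apply: le_ereal_inf_tmp => _ [z _ <-]; rewrite lee_fin edist_ge0.
by apply: ereal_sup_ubound; exists x => //; split => //; rewrite /ecball /= edist_refl ltW.
Qed.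

Lemma flat_along_of_beta_lt K x (r b : R) : 0 < r -> (beta K x r < (b / r)%:E)%E ->
  exists u, flat_along K x u r b.
Proof.
move=> r_gt0; rewrite /beta lte_pdivrMl // -EFinM mulrC divfK ?gt_eqF //.
move=> /ereal_inf_lt [_ [_ [v v0 <-] <-]]; rewrite gt_max => /andP[KL LK].
have [u u_unit Lu] := line_through_unit x v0; rewrite Lu in KL LK.
exists u; split => // [y Ky yr|s sr].
  have : (edist_set y (range (line_pt x u)) < b%:E)%E.
    by apply: le_lt_trans KL; apply: ereal_sup_ubound; exists y.
  move=> /ereal_inf_lt [_ [_ [t _ <-] <-]]; rewrite lte_fin edist_sym => yb.
  have := edist_line_pt_sqr x t y u_unit; have := edist_ge0 (line_pt x u t) y.
  have := sqr_ge0 (along x u y - t); nra.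
have : (edist_set (line_pt x u s) K < b%:E)%E.
  apply: le_lt_trans LK; apply: ereal_sup_ubound; exists (line_pt x u s) => //.
  by split; [exists s|rewrite /ecball /= edist_line_pt].
by move=> /ereal_inf_lt [_ [z Kz <-]]; rewrite lte_fin; exists z.
Qed.

End Plane.

Theorem lemma5p4 (R : realType) (K : set (R * R)) (x : R * R) (r : R) :
  compact K -> connected K -> (H1 K < +oo)%E ->
  K x -> 0 < r -> (r%:E < ediam K)%E ->
  (beta K x r <= (1 / 2)%:E)%E ->
  ((2 * r)%:E - (3 * r)%:E * beta K x r <= H1 (K `&` eball x r))%E.
Proof.
move=> _ K_connected _ Kx r_gt0 _ beta_le.
have beta_fin : beta K x r \is a fin_num.
  by rewrite ge0_fin_numE ?beta_ge0 // (le_lt_trans beta_le) ?ltry.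
rewrite -(fineK beta_fin) lee_fin in beta_le *; set B := fine (beta K x r) in beta_le *.
have B_ge0 : 0 <= B by rewrite -lee_fin /B fineK ?beta_ge0.
rewrite -EFinM -EFinB; apply/lee_addgt0Pr => e e_gt0.
pose b := r * B + Num.min (e / 3) (r / 10).
have [e3 r10] : Num.min (e / 3) (r / 10) <= e / 3 /\ Num.min (e / 3) (r / 10) <= r / 10.
  by split; rewrite ge_min lexx ?orbT.
have min_gt0 : 0 < Num.min (e / 3) (r / 10) by rewrite lt_min; apply/andP; split; lra.
have b_gt0 : 0 < b by rewrite /b; nra.
have b_le_r : 5 * b <= 4 * r by rewrite /b; nra.
have [|u flatK] := @flat_along_of_beta_lt _ K x r b r_gt0.
  by rewrite -(fineK beta_fin) lte_fin ltr_pdivlMr // mulrC /b ltrDl.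
apply: le_trans (leeD2r _ (flat_along_H1_ge Kx K_connected b_gt0 b_le_r flatK)).
by rewrite -EFinD lee_fin /b; lra.
Qed.
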